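(* Let $a=p^\gamma$ where $p$ is an odd prime and $\gamma\ge1$. Let $G=(\mathbb{Z}/a\mathbb{Z})^*$ and let $H$ be the maximal subgroup of $G$ of odd order (equivalently, the unique maximal subgroup of $G$ not containing the class of $-1$). Then \[ \{n\in\mathbb{N}:\ \text{every prime } q \text{ dividing } n \text{ satisfies } q \bmod a\in H\}\subseteq\mathcal{E}^*_a . \]
   Context: For a positive integer $n$, let $R(n;a)$ be the number of pairs $(x,y)$ of positive integers with $\frac{a}{n}=\frac1x+\frac1y$. Let $\mathcal{E}^*_a=\{n\in\mathbb{N}: R(n;a)=0,\ \gcd(n,a)=1\}$. If $\phi(a)=2^m d$ with $d$ odd and $g$ is a primitive root modulo $a$, then $H=\{g^{2^m j}:1\le j\le d\}$, of index $2^m$ in $G$. *)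

From mathcomp Require Import all_boot all_order all_algebra all_fingroup all_solvable.
Set Implicit Arguments. Unset Strict Implicit. Unset Printing Implicit Defensive.
Import GRing.Theory Num.Theory.

(* Existence of a representation a/n = 1/x + 1/y with x, y positive integers;
   R(n;a) = 0 iff this fails. Equation taken in the rationals. *)
Definition has_repr (n a : nat) : Prop :=
  exists x y : nat, (0 < x)%N /\ (0 < y)%N /\
    ((a%:R / n%:R : rat) = 1 / x%:R + 1 / y%:R)%R.

Definition Estar (a : nat) : nat -> Prop :=
  fun n => (0 < n)%N /\ ~ has_repr n a /\ coprime n a.

(* G = ('Z/a'Z)^* ; H = the maximal subgroup of G of odd order, i.e. the
   2'-core (largest normal 2'-subgroup) of the abelian group G. *)
Definition Hodd (a : nat) : {set {unit 'Z_a}} :=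
  'O_(2^')([set: {unit 'Z_a}])%g.

Definition res_in_H (a q : nat) : Prop :=
  exists u : {unit 'Z_a}, (FinRing.uval u = (q%:R : 'Z_a))%R /\ u \in Hodd a.

From mathcomp Require Import all_boot all_order all_algebra all_fingroup all_solvable.
From mathcomp Require Import ring zify.
Set Implicit Arguments. Unset Strict Implicit. Unset Printing Implicit Defensive.
Import GRing.Theory Num.Theory.

(* If a/n = 1/x + 1/y, write x = g u, y = g v with u, v coprime; then
   a u v g = n (u + v) forces u | n, v | n and, as n is prime to a, a | u + v.
   Every divisor of n has its residue in H, so u v^-1 = -1 (mod a) lies in H.
   But -1 has order 2 once a > 2, whereas H has odd order. *)

Lemma Zp_nat_eq0 {a : nat} (k : nat) : 1 < a -> (k%:R : 'Z_a)%R = 0%R <-> a %| k.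
Proof.
move=> a_gt1; rewrite /dvdn -(val_Zp_nat a_gt1 k); split=> [-> //|/eqP k0].
exact: val_inj.
Qed.

Lemma p'elt_expg_prime_eq1 (gT : finGroupType) (p : nat) (x : gT) :
  prime p -> (p^').-elt%g x -> (x ^+ p = 1)%g -> x = 1%g.
Proof.
move=> p_pr p'x xp1; apply/eqP; rewrite -order_eq1; apply/eqP.
apply: (pnat_1 _ p'x); apply: pnat_dvd (pnat_id p_pr).
by rewrite order_dvdn xp1.
Qed.

Section EgyptianFractions.
Local Open Scope ring_scope.

Lemma egyptian_nat (F : numFieldType) (a n x y : nat) :
  (0 < n)%N -> (0 < x)%N -> (0 < y)%N ->
  a%:R / n%:R = 1 / x%:R + 1 / y%:R :> F -> (a * x * y = n * (x + y))%N.
Proof.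
move=> n_gt0 x_gt0 y_gt0 E.
have n0 : n%:R != 0 :> F by rewrite pnatr_eq0 -lt0n.
have x0 : x%:R != 0 :> F by rewrite pnatr_eq0 -lt0n.
have y0 : y%:R != 0 :> F by rewrite pnatr_eq0 -lt0n.
apply/eqP; rewrite -(eqr_nat F) !natrM natrD -(divfK n0 a%:R) E; apply/eqP.
rewrite !mulrDl !div1r; field; exact/andP.
Qed.

End EgyptianFractions.

Lemma egyptian_coprime_divisors (a n x y : nat) :
  0 < x -> coprime n a -> a * x * y = n * (x + y) ->
  exists u v, [/\ u %| n, v %| n & a %| u + v].
Proof.
move=> x_gt0 co_na E.
set g := gcdn x y; have g_gt0 : 0 < g by rewrite gcdn_gt0 x_gt0.
set u := x %/ g; set v := y %/ g.
have xE : x = u * g by rewrite divnK // dvdn_gcdl.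
have yE : y = v * g by rewrite divnK // dvdn_gcdr.
have co_uv : coprime u v.
  by rewrite /coprime -(eqn_pmul2r g_gt0) mul1n muln_gcdl -xE -yE.
have Euv : a * u * v * g = n * (u + v).
  apply/eqP; rewrite -(eqn_pmul2r g_gt0); apply/eqP.
  rewrite xE yE in E; transitivity (a * (u * g) * (v * g)); first ring.
  by rewrite E; ring.
exists u, v; split.
- rewrite -(@Gauss_dvdl u n (u + v)); last by rewrite /coprime gcdnDl.
  by rewrite -Euv -!mulnA dvdn_mull // dvdn_mulr.
- rewrite -(@Gauss_dvdl v n (u + v)); last by rewrite /coprime gcdnDr gcdnC.
  by rewrite -Euv -mulnA dvdn_mull // dvdn_mulr.
- rewrite -(@Gauss_dvdr a n (u + v)); last by rewrite coprime_sym.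
  by rewrite -Euv -!mulnA dvdn_mulr.
Qed.

Section UnitResidues.

Variable a : nat.
Hypothesis a_gt1 : 1 < a.

Definition unit_res_in (H : {set {unit 'Z_a}}) (q : nat) : Prop :=
  exists u : {unit 'Z_a}, (FinRing.uval u = q%:R)%R /\ u \in H.

Variable H : {group {unit 'Z_a}}.

Lemma unit_res_inM (m k : nat) :
  unit_res_in H m -> unit_res_in H k -> unit_res_in H (m * k).
Proof.
move=> [u [um uH]] [v [vk vH]]; exists (u * v)%g; split; last exact: groupM.
by rewrite natrM -um -vk.
Qed.

Lemma unit_res_in_dvd (n : nat) : 0 < n ->
  (forall q, prime q -> q %| n -> unit_res_in H q) ->
  forall d, d %| n -> unit_res_in H d.
Proof.
move=> n_gt0 resP d; elim/ltn_ind: d => d IHd d_dvd.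
have d_gt0 : 0 < d by apply: dvdn_gt0 d_dvd.
have [d_gt1 | d_le1] := ltnP 1 d; last first.
  have -> : d = 1 by apply/eqP; rewrite eqn_leq d_le1.
  by exists 1%g; split; last exact: group1.
have q_pr := pdiv_prime d_gt1; have q_dvd := pdiv_dvd d.
rewrite -(divnK q_dvd); apply: unit_res_inM.
  apply: IHd; first by rewrite ltn_Pdiv // prime_gt1.
  by apply: dvdn_trans d_dvd; apply: dvdn_div.
exact: resP (dvdn_trans q_dvd d_dvd).
Qed.

Lemma unit_res_coprime (q : nat) : unit_res_in H q -> coprime q a.
Proof.
by move=> [u [uq _]]; rewrite coprime_sym -unitZpE // -uq (valP u).
Qed.

Lemma unit_res_in_opp1 (u v : nat) :
  unit_res_in H u -> unit_res_in H v -> a %| u + v ->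
  exists w : {unit 'Z_a}, (FinRing.uval w = -1)%R /\ w \in H.
Proof.
move=> [x [xu xH]] [y [yv yH]] /(Zp_nat_eq0 _ a_gt1)/eqP.
rewrite natrD addr_eq0 => /eqP uE.
exists (x * y^-1)%g; split; last by rewrite groupM ?groupV.
have -> : FinRing.uval (x * y^-1)%g = (FinRing.uval x / FinRing.uval y)%R by [].
by rewrite xu uE mulNr -yv divrr ?(valP y).
Qed.

Lemma unit_opp1_notin_p'group (w : {unit 'Z_a}) :
  2 < a -> (2^').-group%g H -> (FinRing.uval w = -1)%R -> w \notin H.
Proof.
move=> a_gt2 oddH w_opp1; apply/negP=> wH.
have w1 : w = 1%g.
  apply: p'elt_expg_prime_eq1 (mem_p_elt oddH wH) _ => //.
  by apply: val_inj; rewrite /= w_opp1 mulrNN mulr1.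
have /(Zp_nat_eq0 _ a_gt1) : (2%:R : 'Z_a)%R = 0%R.
  have : FinRing.uval w = 1%R by rewrite w1.
  by rewrite w_opp1 => /eqP; rewrite eq_sym -subr_eq0 opprK => /eqP.
by move/dvdn_leq; lia.
Qed.

End UnitResidues.

Theorem Estar_of_res_in_Hodd (a n : nat) : 2 < a -> 0 < n ->
  (forall q, prime q -> q %| n -> res_in_H a q) -> Estar a n.
Proof.
move=> a_gt2 n_gt0 resP; have a_gt1 : 1 < a by lia.
pose H := 'O_(2^')([set: {unit 'Z_a}])%G.
have divP : forall d, d %| n -> unit_res_in H d := unit_res_in_dvd n_gt0 resP.
have co_na : coprime n a := unit_res_coprime a_gt1 (divP n (dvdnn n)).
split=> //; split=> // -[x [y [x_gt0 [y_gt0 E]]]].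
have [u [v [u_dvd v_dvd a_dvd]]] :=
  egyptian_coprime_divisors x_gt0 co_na (egyptian_nat n_gt0 x_gt0 y_gt0 E).
have [w [w_opp1 wH]] := unit_res_in_opp1 a_gt1 (divP _ u_dvd) (divP _ v_dvd) a_dvd.
by move: wH; apply/negP/unit_opp1_notin_p'group; rewrite ?pcore_pgroup.
Qed.

Theorem lemma2p3 (p gamma : nat) :
  prime p -> odd p -> (0 < gamma)%N ->
  forall n : nat, (0 < n)%N ->
    (forall q : nat, prime q -> q %| n -> res_in_H (p ^ gamma) q) ->
    Estar (p ^ gamma) n.
Proof.
move=> p_pr p_odd gamma_gt0 n; apply: Estar_of_res_in_Hodd.
have p_gt2 : 2 < p.
  by rewrite ltn_neqAle prime_gt1 // andbT; apply: contraTneq p_odd => <-.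
apply: leq_trans p_gt2 _; rewrite -{1}(expn1 p).
exact: leq_pexp2l (prime_gt0 p_pr) gamma_gt0.
Qed.
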